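(* Let $\Lambda$ be a source-free, finite, primitive, non-empty $k$-graph with shift $\sigma=(\sigma_1,\dots,\sigma_k)$ on its infinite-path space $\Lambda^\infty$. For every $p\in\mathbb{N}^k$ with $p\ge(1,\dots,1)$, the local homeomorphism $\sigma^p:\Lambda^\infty\to\Lambda^\infty$ is positively expansive and exact.
   Context: A $k$-graph is a countable category $\Lambda$ with a functor $d:\Lambda\to\mathbb{N}^k$ (degree) such that for every $\lambda\in\Lambda$ and $m,n\in\mathbb{N}^k$ with $d(\lambda)=m+n$ there are unique $\mu,\nu$ with $d(\mu)=m$, $d(\nu)=n$, $\lambda=\mu\nu$. $\Lambda^n=d^{-1}(n)$; $\Lambda^0$ are the vertices; $v\Lambda^n w=\{\lambda\in\Lambda^n: r(\lambda)=v,\ s(\lambda)=w\}$. $\Lambda$ is finite if each $\Lambda^n$ is finite, source-free if $v\Lambda^n\neq\varnothing$ for all $v,n$, primitive if there is $n\in\mathbb{N}^k\setminus\{0\}$ with $v\Lambda^n w\neq\varnothing$ for all vertices $v,w$. $\Omega_k$ is the $k$-graph with morphisms $\{(m,n)\in\mathbb{N}^k\times\mathbb{N}^k: m\le n\}$, $(l,m)(m,n)=(l,n)$, $d(m,n)=n-m$. $\Lambda^\infty$ is the set of degree-preserving functors $x:\Omega_k\to\Lambda$, with topology generated by cylinder sets $\mathcal{Z}(\lambda)=\{x: x(0,d(\lambda))=\lambda\}$; it is compact Hausdorff. The shift is $\sigma_i(x)(m,n)=x(m+\mathbf{e}_i,n+\mathbf{e}_i)$, so $\sigma^l(x)(m,n)=x(m+l,n+l)$.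 A map $T$ on a compact metric space $(X,d)$ is positively expansive if there is $\epsilon>0$ such that for all distinct $x,y$ there is $n\in\mathbb{N}$ with $d(T^n x,T^n y)\ge\epsilon$; it is exact if for every nonempty open $U$ there is $n$ with $T^n(U)=X$. (A compatible metric on $\Lambda^\infty$ is $\rho_\Lambda(x,y)=2^{-N_{xy}}$, $N_{xy}=\min\{n\in\mathbb{N}: x(nq,(n+1)q)\neq y(nq,(n+1)q)\}$ for a fixed $q\ge(1,\dots,1)$, $\min\varnothing=\infty$.) *)

From Stdlib Require Fin.
From Stdlib Require Import Reals Lia Arith.
From Stdlib Require Import Classical ClassicalEpsilon FunctionalExtensionality.

Set Implicit Arguments.

Definition vec (k : nat) := Fin.t k -> nat.
Definition vzero {k} : vec k := fun _ => 0.
Definition vconst {k} (c : nat) : vec k := fun _ => c.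
Definition vadd {k} (m n : vec k) : vec k := fun i => m i + n i.
Definition vsub {k} (m n : vec k) : vec k := fun i => m i - n i.
Definition vscale {k} (c : nat) (q : vec k) : vec k := fun i => c * q i.
Definition vle {k} (m n : vec k) : Prop := forall i, m i <= n i.

Lemma vle_zero {k} (n : vec k) : vle vzero n.
Proof. intro i; unfold vzero; lia. Qed.

Lemma vle_add_r {k} (m n l : vec k) : vle m n -> vle (vadd m l) (vadd n l).
Proof. intros H i; unfold vadd; specialize (H i); lia. Qed.

Lemma vle_scale_S {k} (c : nat) (q : vec k) : vle (vscale c q) (vscale (S c) q).
Proof. intro i; unfold vscale; simpl; lia. Qed.

(* A countable category (objects kObj, morphisms kMor with range r and
   source s; composition kcomp mu nu = "mu nu" is meaningful when
   s mu = r nu) with a degree functor d into N^k having the unique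
   factorisation property. *)
Record kgraph (k : nat) := {
  kObj : Type;
  kMor : Type;
  kr : kMor -> kObj;
  ks : kMor -> kObj;
  kid : kObj -> kMor;
  kcomp : kMor -> kMor -> kMor;
  kd : kMor -> vec k;
  kr_id : forall v, kr (kid v) = v;
  ks_id : forall v, ks (kid v) = v;
  kr_comp : forall mu nu, ks mu = kr nu -> kr (kcomp mu nu) = kr mu;
  ks_comp : forall mu nu, ks mu = kr nu -> ks (kcomp mu nu) = ks nu;
  kcomp_id_l : forall l, kcomp (kid (kr l)) l = l;
  kcomp_id_r : forall l, kcomp l (kid (ks l)) = l;
  kcomp_assoc : forall a b c, ks a = kr b -> ks b = kr c ->
      kcomp (kcomp a b) c = kcomp a (kcomp b c);
  kd_id : forall v, kd (kid v) = vzero;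
  kd_comp : forall mu nu, ks mu = kr nu -> kd (kcomp mu nu) = vadd (kd mu) (kd nu);
  kfact : forall l (m n : vec k), kd l = vadd m n ->
      exists mu nu, ks mu = kr nu /\ kd mu = m /\ kd nu = n /\ l = kcomp mu nu /\
        (forall mu' nu', ks mu' = kr nu' -> kd mu' = m -> kd nu' = n ->
           l = kcomp mu' nu' -> mu' = mu /\ nu' = nu);
  kcountable : exists f : kMor -> nat, forall a b, f a = f b -> a = b
}.

Arguments kObj {k}. Arguments kMor {k}. Arguments kr {k}. Arguments ks {k}.
Arguments kid {k}. Arguments kcomp {k}. Arguments kd {k}.

Section KG.
Context {k : nat} (L : kgraph k).

Definition kfinite : Prop :=
  forall n : vec k, exists s : list (kMor L), forall l, kd L l = n -> List.In l s.

Definition source_free : Prop :=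
  forall (v : kObj L) (n : vec k), exists l, kr L l = v /\ kd L l = n.

Definition primitive_kgraph : Prop :=
  exists n : vec k, n <> vzero /\
    forall v w : kObj L, exists l, kd L l = n /\ kr L l = v /\ ks L l = w.

Definition nonempty_kgraph : Prop := exists v : kObj L, True.

(* Degree-preserving functors Omega_k -> Lambda: x m n H is the image of the
   morphism (m,n) of Omega_k (H : m <= n). *)
Definition ompre := forall m n : vec k, vle m n -> kMor L.

Record is_inf_path (x : ompre) : Prop := {
  ip_deg : forall m n H, kd L (x m n H) = vsub n m;
  ip_id : forall m H, exists v, x m m H = kid L v;
  ip_comp : forall l m n H1 H2 H3,
      ks L (x l m H1) = kr L (x m n H2) /\ x l n H3 = kcomp L (x l m H1) (x m n H2)
}.

Definition infpath := { x : ompre | is_inf_path x }.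

Definition shift_fun (l : vec k) (x : ompre) : ompre :=
  fun m n H => x (vadd m l) (vadd n l) (vle_add_r l H).

Lemma shift_inf_path (l : vec k) (x : ompre) : is_inf_path x -> is_inf_path (shift_fun l x).
Proof.
  intros [Hd Hi Hc]; split; unfold shift_fun.
  - intros m n H; rewrite Hd; apply functional_extensionality; intro i;
      unfold vsub, vadd; lia.
  - intros m H; apply Hi.
  - intros a b c H1 H2 H3; apply Hc.
Qed.

Definition shift (l : vec k) (x : infpath) : infpath :=
  exist _ (shift_fun l (proj1_sig x)) (shift_inf_path l (proj2_sig x)).

Definition cyl (l : kMor L) : infpath -> Prop :=
  fun x => proj1_sig x vzero (kd L l) (vle_zero _) = l.

Definition path_diff (q : vec k) (x y : infpath) (n : nat) : Prop :=
  proj1_sig x (vscale n q) (vscale (S n) q) (vle_scale_S n q) <>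
  proj1_sig y (vscale n q) (vscale (S n) q) (vle_scale_S n q).

Definition rho (q : vec k) (x y : infpath) : R :=
  match excluded_middle_informative (exists n, path_diff q x y n) with
  | left _ => (/ 2) ^ (epsilon (inhabits 0%nat)
                         (fun n => path_diff q x y n /\
                                   forall m, path_diff q x y m -> (n <= m)%nat))
  | right _ => 0
  end.

End KG.
Arguments cyl {k} L l x.
Arguments rho {k} L q x y.
Arguments shift {k} L l x.
Arguments infpath {k} L.
Arguments source_free {k} L.
Arguments kfinite {k} L.
Arguments primitive_kgraph {k} L.
Arguments nonempty_kgraph {k} L.

Inductive gen_top {X : Type} (B : (X -> Prop) -> Prop) : (X -> Prop) -> Prop :=
| gt_basic : forall U, B U -> gen_top B U
| gt_full : gen_top B (fun _ => True)
| gt_inter : forall U V, gen_top B U -> gen_top B V -> gen_top B (fun x => U x /\ V x)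
| gt_union : forall (I : Type) (F : I -> X -> Prop),
    (forall i, gen_top B (F i)) -> gen_top B (fun x => exists i, F i x)
| gt_ext : forall U V, (forall x, U x <-> V x) -> gen_top B U -> gen_top B V.

Definition cyl_open {k} (L : kgraph k) : (infpath L -> Prop) -> Prop :=
  gen_top (fun U => exists l, U = cyl L l).

Definition pos_expansive {X : Type} (d : X -> X -> R) (T : X -> X) : Prop :=
  exists eps : R, (0 < eps)%R /\
    forall x y, x <> y -> exists n, (d (Nat.iter n T x) (Nat.iter n T y) >= eps)%R.

Definition exact {X : Type} (isopen : (X -> Prop) -> Prop) (T : X -> X) : Prop :=
  forall U, isopen U -> (exists x, U x) ->
    exists n, forall y, exists x, U x /\ Nat.iter n T x = y.
Arguments cyl_open {k} L _.

(* The proof only needs source-freeness and primitivity, and rests on the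
   unique factorisation property.  Then:
   - expansiveness: distinct paths differ on some window [n p, n p + M q]
     with M q >= p; after n applications of sigma^p they differ on one of the
     first M blocks [j q, (j+1) q], so rho >= (1/2)^M;
   - exactness: an open set contains a cylinder Z(mu); by primitivity every
     mu extends to a path lam of degree B p ending at any prescribed vertex,
     and sigma^(B p) maps the cylinder onto everything, via y |-> lam.y. *)

From Stdlib Require Import Reals Lia Lra Wf_nat.
From Stdlib Require Import Classical ClassicalEpsilon FunctionalExtensionality ProofIrrelevance.

Lemma vext {k} (m n : vec k) : (forall i, m i = n i) -> m = n.
Proof. intro H; apply functional_extensionality; exact H. Qed.

Definition vmax {k} (m n : vec k) : vec k := fun i => Nat.max (m i) (n i).

Ltac vec_lia :=
  let i := fresh "i" in
  try apply vext; intro i;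
  repeat match goal with
  | H : vle _ _ |- _ => let Hi := fresh in pose proof (H i) as Hi; clear H
  | H : @eq (vec _) _ _ |- _ =>
      let Hi := fresh in pose proof (f_equal (fun f => f i) H) as Hi; clear H
  end;
  unfold vle, vadd, vsub, vzero, vscale, vconst, vmax in *; cbv beta in *; lia.

Lemma vle_refl {k} (a : vec k) : vle a a.
Proof. vec_lia. Qed.

Lemma vle_trans {k} (a b c : vec k) : vle a b -> vle b c -> vle a c.
Proof. intros; vec_lia. Qed.

Lemma vec_bounded : forall k (f : vec k), exists B, vle f (vconst B).
Proof.
  induction k as [|k IH]; intros f.
  - exists 0; intro i; exact (Fin.case0 (fun i => f i <= 0) i).
  - destruct (IH (fun i => f (Fin.FS i))) as [B HB].
    exists (Nat.max (f Fin.F1) B); intro i; unfold vconst.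
    apply (Fin.caseS' i (fun i => f i <= Nat.max (f Fin.F1) B)).
    + lia.
    + intro j; specialize (HB j); unfold vconst in HB; lia.
Qed.

Lemma vconst_le_vscale {k} (c : nat) (p : vec k) :
  vle (vconst 1) p -> vle (vconst c) (vscale c p).
Proof. intros Hp i; specialize (Hp i); unfold vconst, vscale in *; nia. Qed.

Lemma half_pow_anti a b : (a <= b)%nat -> ((/2)^b <= (/2)^a)%R.
Proof.
  intro H; rewrite !pow_inv.
  apply Rinv_le_contravar; [apply pow_lt; lra | apply Rle_pow; [lra | exact H]].
Qed.

Section KGraph.
Context {k : nat} (L : kgraph k).

Lemma fact_uniq a b a' b' : ks L a = kr L b -> ks L a' = kr L b' ->
  kd L a = kd L a' -> kd L b = kd L b' -> kcomp L a b = kcomp L a' b' ->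
  a = a' /\ b = b'.
Proof.
  intros Hab Hab' Ha Hb E.
  destruct (kfact L (kcomp L a b) (kd_comp L a b Hab)) as (mu & nu & _ & _ & _ & _ & U).
  destruct (U a b Hab eq_refl eq_refl eq_refl) as [-> ->].
  destruct (U a' b' Hab' (eq_sym Ha) (eq_sym Hb) E) as [-> ->].
  auto.
Qed.

Lemma deg0_id l : kd L l = vzero -> l = kid L (kr L l).
Proof.
  intro H.
  destruct (fact_uniq (kid L (kr L l)) l l (kid L (ks L l))) as [E _];
    rewrite ?kd_id, ?kr_id, ?ks_id, ?kcomp_id_l, ?kcomp_id_r; auto.
Qed.

Definition Seg (l : kMor L) (m n : vec k) (s : kMor L) : Prop :=
  exists p t, ks L p = kr L s /\ ks L s = kr L t /\ kd L p = m /\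
    vadd m (kd L s) = n /\ l = kcomp L p (kcomp L s t).

Lemma Seg_deg l m n s : Seg l m n s -> vadd m (kd L s) = n.
Proof. intros (p & t & _ & _ & _ & H & _); exact H. Qed.

Lemma Seg_uniq l m n s s' : Seg l m n s -> Seg l m n s' -> s = s'.
Proof.
  intros (p & t & Hps & Hst & Hp & Hs & El) (p' & t' & Hps' & Hst' & Hp' & Hs' & El').
  assert (Hds : kd L s = kd L s') by vec_lia.
  assert (Hrest : ks L p = kr L (kcomp L s t)) by (rewrite kr_comp; auto).
  assert (Hrest' : ks L p' = kr L (kcomp L s' t')) by (rewrite kr_comp; auto).
  assert (Dl : kd L l = vadd m (vadd (kd L s) (kd L t)))
    by (rewrite El, kd_comp, kd_comp, Hp; auto).
  assert (Dl' : kd L l = vadd m (vadd (kd L s') (kd L t')))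
    by (rewrite El', kd_comp, kd_comp, Hp'; auto).
  assert (Hdt : kd L t = kd L t') by vec_lia.
  destruct (fact_uniq _ _ _ _ Hrest Hrest' (eq_trans Hp (eq_sym Hp'))
              ltac:(rewrite !kd_comp, Hds, Hdt by auto; reflexivity)
              (eq_trans (eq_sym El) El')) as [_ Ert].
  apply (fact_uniq _ _ _ _ Hst Hst' Hds Hdt Ert).
Qed.

Lemma Seg_ext l m n s u : Seg l m n s -> ks L l = kr L u -> Seg (kcomp L l u) m n s.
Proof.
  intros (p & t & Hps & Hst & Hp & Hs & El) Hu.
  assert (Hrest : ks L p = kr L (kcomp L s t)) by (rewrite kr_comp; auto).
  assert (Htu : ks L t = kr L u).
  { rewrite <- Hu, El, (ks_comp L _ _ Hrest), (ks_comp L _ _ Hst); reflexivity. }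
  exists p, (kcomp L t u); repeat split; auto.
  - rewrite kr_comp; auto.
  - assert (Hstu : ks L (kcomp L s t) = kr L u) by (rewrite ks_comp; auto).
    rewrite El, (kcomp_assoc L _ _ _ Hrest Hstu), (kcomp_assoc L _ _ _ Hst Htu).
    reflexivity.
Qed.

Lemma Seg_prefix mu nu : ks L mu = kr L nu -> Seg (kcomp L mu nu) vzero (kd L mu) mu.
Proof.
  intro H; exists (kid L (kr L mu)), nu; repeat split; auto.
  - apply ks_id.
  - apply kd_id.
  - rewrite <- (kr_comp L mu nu H), kcomp_id_l; reflexivity.
Qed.

Lemma Seg_exists l m n : vle m n -> vle n (kd L l) -> exists s, Seg l m n s.
Proof.
  intros Hmn Hnl.
  destruct (kfact L l (m:=n) (n:=vsub (kd L l) n)) as (a & t & Hat & Ha & _ & El & _);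
    [vec_lia|].
  destruct (kfact L a (m:=m) (n:=vsub n m)) as (p & s & Hps & Hp & Hs & Ea & _);
    [rewrite Ha; vec_lia|].
  assert (Hst : ks L s = kr L t) by (rewrite <- Hat, Ea, ks_comp; auto).
  exists s, p, t; repeat split; auto.
  - rewrite Hs; vec_lia.
  - rewrite El, Ea; apply kcomp_assoc; auto.
Qed.

Lemma Seg_comp l a b c s1 s2 s3 : vle a b -> vle b c ->
  Seg l a b s1 -> Seg l b c s2 -> Seg l a c s3 ->
  ks L s1 = kr L s2 /\ s3 = kcomp L s1 s2.
Proof.
  intros Hab Hbc S1 S2 S3.
  pose proof (Seg_deg _ _ _ _ S3) as D3.
  destruct S3 as (p & t & Hps & Hst & Hp & _ & El).
  destruct (kfact L s3 (m:=vsub b a) (n:=vsub c b)) as (u & v & Huv & Hu & Hv & Es & _);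
    [vec_lia|].
  assert (Hpu : ks L p = kr L u) by (rewrite Hps, Es, kr_comp; auto).
  assert (Hvt : ks L v = kr L t) by (rewrite <- Hst, Es, ks_comp; auto).
  assert (Hu_vt : ks L u = kr L (kcomp L v t)) by (rewrite kr_comp; auto).
  assert (Su : Seg l a b u).
  { exists p, (kcomp L v t); repeat split; auto.
    - rewrite Hu; vec_lia.
    - rewrite El, Es, (kcomp_assoc L u v t Huv Hvt); reflexivity. }
  assert (Sv : Seg l b c v).
  { exists (kcomp L p u), t; repeat split; auto.
    - rewrite ks_comp; auto.
    - rewrite kd_comp, Hp, Hu by auto; vec_lia.
    - rewrite Hv; vec_lia.
    - rewrite El, Es, (kcomp_assoc L u v t Huv Hvt), (kcomp_assoc L p u _ Hpu Hu_vt).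
      reflexivity. }
  rewrite (Seg_uniq _ _ _ _ _ S1 Su), (Seg_uniq _ _ _ _ _ S2 Sv); auto.
Qed.

(* [ev x m n] is x(m,n), made independent of the proof of m <= n. *)
Definition ev (x : infpath L) (m n : vec k) : kMor L :=
  epsilon (inhabits (proj1_sig x vzero vzero (vle_zero vzero)))
          (fun s => exists H, proj1_sig x m n H = s).

Lemma ev_eq x m n H : ev x m n = proj1_sig x m n H.
Proof.
  unfold ev.
  destruct (epsilon_spec (inhabits (proj1_sig x vzero vzero (vle_zero vzero)))
     (fun s => exists H, proj1_sig x m n H = s)
     (ex_intro _ (proj1_sig x m n H) (ex_intro _ H eq_refl))) as [H' E].
  rewrite <- E; f_equal; apply proof_irrelevance.
Qed.

Lemma ev_deg x m n : vle m n -> kd L (ev x m n) = vsub n m.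
Proof. intro H; rewrite (ev_eq x m n H); apply (ip_deg (proj2_sig x)). Qed.

Lemma ev_comp x a b c : vle a b -> vle b c ->
  ks L (ev x a b) = kr L (ev x b c) /\ ev x a c = kcomp L (ev x a b) (ev x b c).
Proof.
  intros Hab Hbc.
  rewrite (ev_eq x a b Hab), (ev_eq x b c Hbc), (ev_eq x a c (vle_trans _ _ _ Hab Hbc)).
  apply (ip_comp (proj2_sig x)).
Qed.

Lemma path_ext (x y : infpath L) :
  (forall m n, vle m n -> ev x m n = ev y m n) -> x = y.
Proof.
  intro Hall; destruct x as [fx px], y as [fy py].
  assert (E : fx = fy).
  { apply functional_extensionality_dep; intro m.
    apply functional_extensionality_dep; intro n.
    apply functional_extensionality; intro H.
    specialize (Hall m n H); rewrite !(ev_eq _ m n H) in Hall; exact Hall. }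
  subst fy; f_equal; apply proof_irrelevance.
Qed.

Lemma ev_seg x a m n c : vle a m -> vle m n -> vle n c ->
  Seg (ev x a c) (vsub m a) (vsub n a) (ev x m n).
Proof.
  intros Ham Hmn Hnc.
  destruct (ev_comp x a m c Ham (vle_trans _ _ _ Hmn Hnc)) as [K1 E1].
  destruct (ev_comp x m n c Hmn Hnc) as [K2 E2].
  exists (ev x a m), (ev x n c); repeat split; auto.
  - rewrite K1, E2, kr_comp; auto.
  - apply ev_deg; auto.
  - rewrite ev_deg by auto; vec_lia.
  - rewrite E1, E2; reflexivity.
Qed.

Lemma ev_prefix_seg x m n c : vle m n -> vle n c -> Seg (ev x vzero c) m n (ev x m n).
Proof.
  intros Hmn Hnc.
  replace m with (vsub m vzero) at 1 by vec_lia.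
  replace n with (vsub n vzero) at 1 by vec_lia.
  apply ev_seg; auto using vle_zero.
Qed.

Lemma ev_agree x y a c m n : ev x a c = ev y a c -> vle a m -> vle m n -> vle n c ->
  ev x m n = ev y m n.
Proof.
  intros E H1 H2 H3.
  apply (Seg_uniq (ev x a c) (vsub m a) (vsub n a)).
  - apply ev_seg; auto.
  - rewrite E; apply ev_seg; auto.
Qed.

Lemma ev_agree_comp x y a b c : vle a b -> vle b c ->
  ev x a b = ev y a b -> ev x b c = ev y b c -> ev x a c = ev y a c.
Proof.
  intros Hab Hbc E1 E2.
  rewrite (proj2 (ev_comp x a b c Hab Hbc)), (proj2 (ev_comp y a b c Hab Hbc)), E1, E2.
  reflexivity.
Qed.

Lemma ev_range x N : kr L (ev x vzero N) = kr L (ev x vzero vzero).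
Proof.
  destruct (ev_comp x vzero vzero N (vle_refl _) (vle_zero _)) as [K E].
  rewrite E at 1; rewrite kr_comp; auto.
Qed.

Lemma ev_shift_iter (p : vec k) j : forall x m n, vle m n ->
  ev (Nat.iter j (shift L p) x) m n = ev x (vadd m (vscale j p)) (vadd n (vscale j p)).
Proof.
  induction j as [|j IH]; intros x m n H.
  - simpl; f_equal; vec_lia.
  - change (Nat.iter (S j) (shift L p) x) with (shift L p (Nat.iter j (shift L p) x)).
    rewrite (ev_eq _ m n H); unfold shift; cbn [proj1_sig]; unfold shift_fun.
    rewrite <- ev_eq, IH by (apply vle_add_r; auto).
    f_equal; vec_lia.
Qed.

(* Concatenation of a finite path lam with an infinite path y starting at the
   source of lam: (lam.y)(m,n) is the segment between m and n of the finite
   path lam y(0,N), for any N >= n. *)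
Section Concatenation.
Variable lam : kMor L.
Variable y : infpath L.
Hypothesis Hlam : ks L lam = kr L (ev y vzero vzero).

Let Hlam_N N : ks L lam = kr L (ev y vzero N).
Proof. rewrite ev_range; exact Hlam. Qed.

Definition approx N := kcomp L lam (ev y vzero N).

Lemma approx_deg N : kd L (approx N) = vadd (kd L lam) N.
Proof. unfold approx; rewrite kd_comp, ev_deg by auto using vle_zero; vec_lia. Qed.

Lemma approx_seg_mono N N' m n s : vle N N' -> Seg (approx N) m n s -> Seg (approx N') m n s.
Proof.
  intros H S.
  destruct (ev_comp y vzero N N' (vle_zero _) H) as [K E].
  replace (approx N') with (kcomp L (approx N) (ev y N N')).
  - apply Seg_ext; auto. unfold approx; rewrite ks_comp; auto.
  - unfold approx; rewrite E, kcomp_assoc; auto.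
Qed.

Definition concat_seg m n := epsilon (inhabits lam) (fun s => Seg (approx n) m n s).

Lemma concat_seg_spec m n N : vle m n -> vle n N -> Seg (approx N) m n (concat_seg m n).
Proof.
  intros H1 H2; apply (approx_seg_mono n); auto.
  unfold concat_seg; apply epsilon_spec, Seg_exists; auto.
  rewrite approx_deg; vec_lia.
Qed.

Lemma concat_seg_char m n N s : vle m n -> vle n N -> Seg (approx N) m n s ->
  concat_seg m n = s.
Proof. intros; eapply Seg_uniq; [apply concat_seg_spec|]; eauto. Qed.

Lemma concat_is_path : is_inf_path (fun m n _ => concat_seg m n).
Proof.
  split.
  - intros m n H; pose proof (Seg_deg _ _ _ _ (concat_seg_spec m n n H (vle_refl _))).
    vec_lia.
  - intros m H; exists (kr L (concat_seg m m)); apply deg0_id.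
    pose proof (Seg_deg _ _ _ _ (concat_seg_spec m m m H (vle_refl _))); vec_lia.
  - intros a b c H1 H2 H3.
    apply (Seg_comp (approx c) a b c); auto; apply concat_seg_spec; auto using vle_refl.
Qed.

Definition concat_path : infpath L := exist _ _ concat_is_path.

Lemma ev_concat m n : vle m n -> ev concat_path m n = concat_seg m n.
Proof. intro H; rewrite (ev_eq _ m n H); reflexivity. Qed.

Lemma concat_prefix : ev concat_path vzero (kd L lam) = lam.
Proof.
  rewrite ev_concat by apply vle_zero.
  apply (concat_seg_char _ _ (kd L lam)); auto using vle_zero, vle_refl.
  apply Seg_prefix, Hlam_N.
Qed.

Lemma concat_shift m n : vle m n ->
  ev concat_path (vadd m (kd L lam)) (vadd n (kd L lam)) = ev y m n.
Proof.
  intro H; rewrite ev_concat by (apply vle_add_r; auto).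
  apply (concat_seg_char _ _ (vadd n (kd L lam))); [apply vle_add_r; auto | apply vle_refl|].
  apply (approx_seg_mono n); [vec_lia|].
  destruct (ev_comp y vzero m n (vle_zero _) H) as [K E].
  exists (kcomp L lam (ev y vzero m)), (kid L (ks L (ev y m n))); repeat split.
  - rewrite ks_comp; auto.
  - rewrite kr_id; auto.
  - rewrite kd_comp, ev_deg by auto using vle_zero; vec_lia.
  - rewrite ev_deg by auto; vec_lia.
  - rewrite kcomp_id_r; unfold approx; rewrite E, kcomp_assoc; auto.
Qed.

End Concatenation.

Lemma concat (lam : kMor L) (y : infpath L) : ks L lam = kr L (ev y vzero vzero) ->
  exists z : infpath L, ev z vzero (kd L lam) = lam /\
    forall m n, vle m n -> ev z (vadd m (kd L lam)) (vadd n (kd L lam)) = ev y m n.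
Proof.
  intro Hc; exists (concat_path lam y Hc); split.
  - apply concat_prefix.
  - apply concat_shift.
Qed.

Lemma open_nbhd U : cyl_open L U -> forall x, U x ->
  exists N, forall z, ev z vzero N = ev x vzero N -> U z.
Proof.
  unfold cyl_open; induction 1 as [U [l ->]| |U V _ IHU _ IHV|I F _ IHF|U V HUV _ IHU].
  - intros x Hx; exists (kd L l); intros z Hz.
    unfold cyl in *; rewrite <- ev_eq in *; rewrite Hz; exact Hx.
  - intros x _; exists vzero; auto.
  - intros x [Hu Hv].
    destruct (IHU x Hu) as [N1 H1], (IHV x Hv) as [N2 H2].
    exists (vmax N1 N2); intros z Hz; split;
      [apply H1 | apply H2]; apply (ev_agree z x vzero (vmax N1 N2));
      auto using vle_zero, vle_refl; vec_lia.
  - intros x [i Hi]; destruct (IHF i x Hi) as [N HN].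
    exists N; intros z Hz; exists i; auto.
  - intros x Hx; apply HUV in Hx; destruct (IHU x Hx) as [N HN].
    exists N; intros z Hz; apply HUV; auto.
Qed.

Lemma agree_windows_eq x y (p w : vec k) : vle (vconst 1) p -> vle p w ->
  (forall n, ev x (vscale n p) (vadd (vscale n p) w) = ev y (vscale n p) (vadd (vscale n p) w)) ->
  x = y.
Proof.
  intros Hp Hpw Hall.
  assert (Hpre : forall n, ev x vzero (vscale n p) = ev y vzero (vscale n p)).
  { induction n as [|n IH].
    - apply (ev_agree x y vzero (vadd vzero w)); try vec_lia.
      replace vzero with (vscale 0 p) at 1 2 by vec_lia; apply Hall.
    - apply (ev_agree_comp x y vzero (vscale n p)); auto using vle_zero, vle_scale_S.
      apply (ev_agree x y (vscale n p) (vadd (vscale n p) w)); auto using vle_refl, vle_scale_S.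
      vec_lia. }
  apply path_ext; intros m n Hmn.
  destruct (vec_bounded k n) as [B HB].
  pose proof (vconst_le_vscale B p Hp).
  apply (ev_agree x y vzero (vscale B p)); auto using vle_zero; vec_lia.
Qed.

Lemma differ_on_block x y (q : vec k) M : 0 < M ->
  ev x vzero (vscale M q) <> ev y vzero (vscale M q) ->
  exists j, j < M /\ path_diff q x y j.
Proof.
  intros HM Hdiff; apply NNPP; intro Hno.
  assert (Hblock : forall j, j < M ->
      ev x (vscale j q) (vscale (S j) q) = ev y (vscale j q) (vscale (S j) q)).
  { intros j Hj; apply NNPP; intro Hne; apply Hno; exists j; split; auto.
    unfold path_diff; rewrite <- !ev_eq; exact Hne. }
  apply Hdiff; clear Hdiff Hno.
  induction M as [|[|M] IH]; [lia| |].
  - replace vzero with (vscale 0 q) by vec_lia; apply Hblock; lia.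
  - apply (ev_agree_comp x y vzero (vscale (S M) q));
      [apply vle_zero | apply vle_scale_S | | apply Hblock; lia].
    apply IH; [lia | intros j Hj; apply Hblock; lia].
Qed.

Lemma rho_ge q x y j : path_diff q x y j -> ((/2)^j <= rho L q x y)%R.
Proof.
  intro Hd; unfold rho.
  destruct (excluded_middle_informative _) as [Hex|Hno]; [|exfalso; eauto].
  assert (Hleast : exists n, path_diff q x y n /\ forall m, path_diff q x y m -> n <= m).
  { destruct (dec_inh_nat_subset_has_unique_least_element _
                (fun n => classic (path_diff q x y n)) Hex) as [n [Hn _]].
    eauto. }
  match goal with |- context [epsilon ?i ?P] =>
    destruct (epsilon_spec i P Hleast) as [_ Hmin] end.
  apply half_pow_anti, Hmin, Hd.
Qed.

(* Positive expansiveness of sigma^p, with constant (1/2)^M where M q >= p. *)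
Lemma shift_pos_expansive p q : vle (vconst 1) p -> vle (vconst 1) q ->
  pos_expansive (rho L q) (shift L p).
Proof.
  intros Hp Hq.
  destruct (vec_bounded k p) as [Mp HMp]; set (M := S Mp).
  assert (HpMq : vle p (vscale M q)).
  { pose proof (vconst_le_vscale M q Hq); unfold M in *; vec_lia. }
  exists ((/2)^M)%R; split; [apply pow_lt; lra|].
  intros x y Hxy.
  assert (Hwin : exists n, ev x (vscale n p) (vadd (vscale n p) (vscale M q)) <>
                           ev y (vscale n p) (vadd (vscale n p) (vscale M q))).
  { apply NNPP; intro Hno; apply Hxy, (agree_windows_eq x y p (vscale M q) Hp HpMq).
    intro n; apply NNPP; intro Hne; apply Hno; eauto. }
  destruct Hwin as [n Hn]; exists n.
  set (X := Nat.iter n (shift L p) x); set (Y := Nat.iter n (shift L p) y).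
  assert (Hdiff : ev X vzero (vscale M q) <> ev Y vzero (vscale M q)).
  { unfold X, Y; rewrite !ev_shift_iter by apply vle_zero.
    replace (vadd vzero (vscale n p)) with (vscale n p) by vec_lia.
    replace (vadd (vscale M q) (vscale n p)) with (vadd (vscale n p) (vscale M q))
      by vec_lia.
    exact Hn. }
  destruct (differ_on_block X Y q M (Nat.lt_0_succ Mp) Hdiff) as [j [Hj Hd]].
  apply Rle_ge, Rle_trans with ((/2)^j)%R.
  - apply half_pow_anti; lia.
  - apply rho_ge, Hd.
Qed.

Lemma extend_to_vertex (n0 : vec k) mu w D : source_free L ->
  (forall v w : kObj L, exists l, kd L l = n0 /\ kr L l = v /\ ks L l = w) ->
  vle (vadd (kd L mu) n0) D ->
  exists lam, kd L lam = D /\ ks L lam = w /\ Seg lam vzero (kd L mu) mu.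
Proof.
  intros Hsf Hprim HD.
  destruct (Hsf (ks L mu) (vsub (vsub D (kd L mu)) n0)) as [al [Hal_r Hal_d]].
  destruct (Hprim (ks L al) w) as [be [Hbe_d [Hbe_r Hbe_s]]].
  assert (Halbe : ks L al = kr L be) by auto.
  assert (Hmu : ks L mu = kr L (kcomp L al be)) by (rewrite kr_comp; auto).
  exists (kcomp L mu (kcomp L al be)); repeat split.
  - rewrite !kd_comp, Hal_d, Hbe_d by auto; vec_lia.
  - rewrite !ks_comp by auto; exact Hbe_s.
  - apply Seg_prefix, Hmu.
Qed.

(* Exactness of sigma^p: an open set around x contains the cylinder of some
   x(0,N), and its image under (sigma^p)^B is everything once B p >= N + n0. *)
Lemma shift_exact p : vle (vconst 1) p -> source_free L -> primitive_kgraph L ->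
  exact (cyl_open L) (shift L p).
Proof.
  intros Hp Hsf [n0 [_ Hprim]] U HU [x Hx].
  destruct (open_nbhd U HU x Hx) as [N HN].
  destruct (vec_bounded k (vadd N n0)) as [B HB].
  pose proof (vconst_le_vscale B p Hp).
  assert (HNmu : kd L (ev x vzero N) = N) by (rewrite ev_deg by apply vle_zero; vec_lia).
  exists B; intro y.
  destruct (extend_to_vertex n0 (ev x vzero N) (kr L (ev y vzero vzero)) (vscale B p))
    as [lam [Hlam_d [Hlam_s Hlam_pre]]]; auto.
  { rewrite HNmu; vec_lia. }
  destruct (concat lam y Hlam_s) as [z [Hz_pre Hz_shift]].
  rewrite Hlam_d in Hz_pre, Hz_shift.
  exists z; split.
  - rewrite HNmu in Hlam_pre.
    apply HN, (Seg_uniq lam vzero N); [|exact Hlam_pre].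
    rewrite <- Hz_pre; apply ev_prefix_seg; [apply vle_zero | vec_lia].
  - apply path_ext; intros m n Hmn.
    rewrite ev_shift_iter by exact Hmn; apply Hz_shift, Hmn.
Qed.

End KGraph.

Theorem lemma6p6 (k : nat) (L : kgraph k)
  (Hsf : source_free L) (Hfin : kfinite L) (Hprim : primitive_kgraph L)
  (Hne : nonempty_kgraph L)
  (p : vec k) (Hp : vle (vconst 1) p) :
  (forall q : vec k, vle (vconst 1) q -> pos_expansive (rho L q) (shift L p)) /\
  exact (cyl_open L) (shift L p).
Proof.
  split.
  - intros q Hq; apply shift_pos_expansive; assumption.
  - apply shift_exact; assumption.
Qed.
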